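(* Let $I$ be an interval and let $a(t,x)$, $\eta(t,x)$ be real functions on $I\times\mathbf{R}^d$ with $\nabla\eta\in L^\infty(I\times\mathbf{R}^d)$, $a\in L^\infty(I\times\mathbf{R}^d)$ and $a\ge c>0$. Set $\mathcal U(t,x,\xi)=(1+|\nabla\eta|^2)|\xi|^2-(\xi\cdot\nabla\eta)^2$ and $\gamma=(a^2\mathcal U)^{1/4}$. Then there exists $c_0>0$ such that $|\det\operatorname{Hess}_\xi\gamma(t,x,\xi)|\ge c_0$ for all $t\in I$, $x\in\mathbf{R}^d$, $\xi\in\mathcal C_0=\{\frac12\le|\xi|\le2\}$.
   Context: $\operatorname{Hess}_\xi\gamma=\big(\partial^2\gamma/\partial\xi_j\partial\xi_k\big)_{j,k}$. *)

(* classical reals. Vectors of R^d are functions nat -> R,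
   of which only the coordinates 0..d-1 are used. *)
From Stdlib Require Import Reals Lra.
Open Scope R_scope.

Fixpoint rsum (n : nat) (f : nat -> R) : R :=
  match n with O => 0 | S m => rsum m f + f m end.

Definition sqnorm (d : nat) (v : nat -> R) : R := rsum d (fun i => v i * v i).
Definition dot (d : nat) (u v : nat -> R) : R := rsum d (fun i => u i * v i).

Definition shift (x : nat -> R) (i : nat) (s : R) : nat -> R :=
  fun j => if Nat.eqb j i then x j + s else x j.

Definition is_partial (f : (nat -> R) -> R) (x : nat -> R) (i : nat) (l : R) : Prop :=
  derivable_pt_lim (fun s => f (shift x i s)) 0 l.

Definition is_hessian (d : nat) (f : (nat -> R) -> R) (x : nat -> R)
    (H : nat -> nat -> R) : Prop :=
  exists (delta : R) (G : (nat -> R) -> nat -> R),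
    0 < delta /\
    (forall y, sqnorm d (fun i => y i - x i) < delta * delta ->
       forall k, (k < d)%nat -> is_partial f y k (G y k)) /\
    (forall j k, (j < d)%nat -> (k < d)%nat ->
       is_partial (fun y => G y k) x j (H j k)).

Fixpoint det (n : nat) (A : nat -> nat -> R) : R :=
  match n with
  | O => 1
  | S m => rsum (S m) (fun j =>
      (-1) ^ j * A O j *
      det m (fun i k => A (S i) (if Nat.ltb k j then k else S k)))
  end.

(* U(t,x,xi) = (1+|grad eta|^2)|xi|^2 - (xi . grad eta)^2, with p = grad eta(t,x) *)
Definition Ufun (d : nat) (p : nat -> R) (xi : nat -> R) : R :=
  (1 + sqnorm d p) * sqnorm d xi - (dot d xi p) ^ 2.

Definition gammafun (d : nat) (a : R) (p : nat -> R) (xi : nat -> R) : R :=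
  Rpower (a ^ 2 * Ufun d p xi) (/ 4).

Definition is_interval (I : R -> Prop) : Prop :=
  forall s u v, I s -> I u -> s <= v <= u -> I v.

From Stdlib Require Import Reals.
Open Scope R_scope.
From Stdlib Require Import Lra Lia FunctionalExtensionality.
From mathcomp Require ssreflect ssrfun ssrbool eqtype ssrnat fintype bigop ssralg zmodp matrix Rstruct.

(* Write p = grad eta(t,x), s = 1 + |p|^2 and M = s Id - p p^T, so that U(xi) = xi^T M xi,
   and W = a^2 U, gamma = W^(1/4).  Since |xi|^2 <= U(xi) <= s |xi|^2, gamma is smooth
   away from xi = 0 and a direct computation gives
     grad gamma = alpha M xi,   Hess gamma = alpha M - beta (M xi)(M xi)^T,
   with alpha = a^2 W^(-3/4) / 2 = sqrt a / (2 U^(3/4)) and beta = 3 a^4 W^(-7/4) / 4,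
   so that beta U = 3/2 alpha.  For symmetric M and w = M xi one has
   alpha M - beta w w^T = (alpha Id - beta w xi^T) M, and the matrix determinant lemma yields
     det Hess gamma = alpha^d (1 - beta U / alpha) det M = - alpha^d s^(d-1) / 2.
   On C_0 the bounds a >= c and |grad eta|^2 <= K give U <= 4 (1 + K), hence a uniform
   lower bound on alpha and |det Hess gamma| >= alpha_floor^d / 2.
   The file first collects facts on finite sums and on the quadratic form U, then computes
   the first and second partial derivatives of gamma, evaluates the determinant with
   MathComp's matrix library, and finally bounds it from below. *)

Lemma rsum_ext n f g : (forall i, (i < n)%nat -> f i = g i) -> rsum n f = rsum n g.
Proof.
induction n as [|n IH]; intros Hfg; simpl; [reflexivity|].
rewrite IH by (intros; apply Hfg; lia). rewrite Hfg by lia. reflexivity.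
Qed.

Lemma rsum_lin n a b c f g h :
  rsum n (fun i => a * f i + b * g i + c * h i) = a * rsum n f + b * rsum n g + c * rsum n h.
Proof. induction n as [|n IH]; simpl; [ring|rewrite IH; ring]. Qed.

Lemma rsum_shift n k y s (F : nat -> R -> R) : (k < n)%nat ->
  rsum n (fun i => F i (shift y k s i)) = rsum n (fun i => F i (y i)) - F k (y k) + F k (y k + s).
Proof.
induction n as [|n IH]; intros Hk; [lia|]. simpl.
destruct (Nat.eq_dec k n) as [->|Hne].
- rewrite (rsum_ext n (fun i => F i (shift y n s i)) (fun i => F i (y i))).
  + unfold shift. rewrite Nat.eqb_refl. ring.
  + intros i Hi. unfold shift. replace (Nat.eqb i n) with false; [reflexivity|].
    symmetry; apply Nat.eqb_neq; lia.
- rewrite IH by lia.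
  replace (shift y k s n) with (y n)
    by (unfold shift; replace (Nat.eqb n k) with false by (symmetry; apply Nat.eqb_neq; lia); reflexivity).
  ring.
Qed.

Lemma shift_0 x i : shift x i 0 = x.
Proof. extensionality j. unfold shift. destruct (Nat.eqb j i); ring. Qed.

Lemma sqnorm_nonneg d y : 0 <= sqnorm d y.
Proof.
unfold sqnorm; induction d as [|d IH]; simpl; [lra|].
pose proof (Rle_0_sqr (y d)); unfold Rsqr in *; lra.
Qed.

Lemma sqnorm_eq0 d y : sqnorm d y = 0 -> forall i, (i < d)%nat -> y i = 0.
Proof.
unfold sqnorm; induction d as [|d IH]; intros H0 i Hi; [lia|]. simpl in H0.
pose proof (sqnorm_nonneg d y) as Hd; unfold sqnorm in Hd.
pose proof (Rle_0_sqr (y d)) as Hyd; unfold Rsqr in Hyd.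
destruct (Nat.eq_dec i d) as [->|Hne]; [nra|].
apply IH; [lra|lia].
Qed.

Lemma one_plus_sqnorm_pos d p : 0 < 1 + sqnorm d p.
Proof. pose proof (sqnorm_nonneg d p). lra. Qed.

Lemma sqnorm_shift d y k s : (k < d)%nat ->
  sqnorm d (shift y k s) = sqnorm d y + 2 * s * y k + s * s.
Proof.
intros Hk. unfold sqnorm. rewrite (rsum_shift d k y s (fun i v => v * v)) by exact Hk. ring.
Qed.

Lemma dot_shift d y p k s : (k < d)%nat ->
  dot d (shift y k s) p = dot d y p + s * p k.
Proof.
intros Hk. unfold dot. rewrite (rsum_shift d k y s (fun i v => v * p i)) by exact Hk. ring.
Qed.

(* Cauchy-Schwarz, from the nonnegativity of t |-> |y + t p|^2. *)
Lemma cauchy_schwarz d y p : (dot d y p) ^ 2 <= sqnorm d y * sqnorm d p.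
Proof.
set (Y := sqnorm d y); set (P := sqnorm d p); set (D := dot d y p).
assert (Hquad : forall t, 0 <= Y + 2 * t * D + t * t * P).
{ intros t. replace (Y + 2 * t * D + t * t * P) with (sqnorm d (fun i => y i + t * p i))
    by (unfold Y, P, D, sqnorm, dot; rewrite <- (Rmult_1_l (rsum d (fun i => y i * y i))),
        <- rsum_lin; apply rsum_ext; intros; ring).
  apply sqnorm_nonneg. }
assert (HP : 0 <= P) by apply sqnorm_nonneg.
destruct (Req_dec P 0) as [HP0|HP0].
- destruct (Req_dec D 0) as [HD|HD]; [rewrite HD, HP0; lra|].
  specialize (Hquad (- (Y + 1) / (2 * D))). rewrite HP0 in Hquad.
  replace (Y + 2 * (- (Y + 1) / (2 * D)) * D + _ * _ * 0) with (-1) in Hquad by (field; auto). lra.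
- specialize (Hquad (- D / P)).
  replace (Y + 2 * (- D / P) * D + - D / P * (- D / P) * P) with ((Y * P - D ^ 2) / P) in Hquad
    by (field; auto).
  assert (0 <= Y * P - D ^ 2); [|lra].
  apply (Rmult_le_reg_r (/ P)); [apply Rinv_0_lt_compat; lra|lra].
Qed.

Definition Umat d (p : nat -> R) (j k : nat) : R :=
  (if Nat.eqb j k then 1 + sqnorm d p else 0) - p j * p k.

(* The vector M xi, i.e. half the gradient of U at xi. *)
Definition Uvec d (p xi : nat -> R) (j : nat) : R :=
  (1 + sqnorm d p) * xi j - dot d xi p * p j.

Lemma Ufun_lower d p xi : sqnorm d xi <= Ufun d p xi.
Proof.
unfold Ufun. pose proof (cauchy_schwarz d xi p). pose proof (sqnorm_nonneg d xi). nra.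
Qed.

Lemma Ufun_upper d p xi : Ufun d p xi <= (1 + sqnorm d p) * sqnorm d xi.
Proof. unfold Ufun. pose proof (pow2_ge_0 (dot d xi p)). lra. Qed.

Lemma dot_Uvec d p xi : dot d xi (Uvec d p xi) = Ufun d p xi.
Proof.
unfold dot, Uvec, Ufun, sqnorm.
transitivity ((1 + rsum d (fun i => p i * p i)) * rsum d (fun i => xi i * xi i)
   + (- dot d xi p) * rsum d (fun i => xi i * p i) + 0 * rsum d (fun i => 0)).
- rewrite <- rsum_lin. apply rsum_ext; intros; unfold sqnorm; ring.
- unfold dot. ring.
Qed.

Lemma Ufun_shift d p y k s : (k < d)%nat ->
  Ufun d p (shift y k s) = Ufun d p y + s * (2 * Uvec d p y k) + s * s * Umat d p k k.
Proof.
intros Hk. unfold Ufun, Uvec, Umat. rewrite sqnorm_shift, dot_shift, Nat.eqb_refl by exact Hk. ring.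
Qed.

Lemma Uvec_shift d p xi j k s : (j < d)%nat ->
  Uvec d p (shift xi j s) k = Uvec d p xi k + s * Umat d p j k.
Proof.
intros Hj. unfold Uvec, Umat. rewrite dot_shift by exact Hj.
unfold shift. rewrite (Nat.eqb_sym k j). destruct (Nat.eqb j k); ring.
Qed.

Lemma derivable_quadratic c0 c1 c2 :
  derivable_pt_lim (fun s => c0 + s * c1 + s * s * c2) 0 c1.
Proof.
assert (Hid := derivable_pt_lim_id 0).
assert (Hc := fun c => derivable_pt_lim_const c 0).
assert (H : derivable_pt_lim (fun s => c0 + s * c1 + s * s * c2) 0
              (0 + (1 * c1 + 0 * 0) + ((1 * 0 + 0 * 1) * c2 + (0 * 0) * 0))).
{ exact (derivable_pt_lim_plus _ _ _ _ _
    (derivable_pt_lim_plus _ _ _ _ _ (Hc c0) (derivable_pt_lim_mult _ _ _ _ _ Hid (Hc c1)))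
    (derivable_pt_lim_mult _ _ _ _ _ (derivable_pt_lim_mult _ _ _ _ _ Hid Hid) (Hc c2))). }
replace (0 + (1 * c1 + 0 * 0) + ((1 * 0 + 0 * 1) * c2 + (0 * 0) * 0)) with c1 in H by ring.
exact H.
Qed.

Lemma derivable_power_quadratic c0 c1 c2 r : 0 < c0 ->
  derivable_pt_lim (fun s => Rpower (c0 + s * c1 + s * s * c2) r) 0 (r * Rpower c0 (r - 1) * c1).
Proof.
intros Hc0.
replace (r * Rpower c0 (r - 1) * c1) with (r * Rpower (c0 + 0 * c1 + 0 * 0 * c2) (r - 1) * c1)
  by (f_equal; f_equal; f_equal; ring).
apply (derivable_pt_lim_comp (fun s => c0 + s * c1 + s * s * c2) (fun z => Rpower z r)).
- apply derivable_quadratic.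
- apply derivable_pt_lim_power. lra.
Qed.

(* With W = A^2 U, the gradient of gamma = W^(1/4) is alpha * M xi,
   where alpha = A^2 W^(-3/4) / 2. *)
Definition alpha d A p xi : R := / 2 * A ^ 2 * Rpower (A ^ 2 * Ufun d p xi) (/ 4 - 1).

(* The gradient of alpha is - beta * M xi, where beta = 3 A^4 W^(-7/4) / 4. *)
Definition beta d A p xi : R := 3 / 4 * A ^ 4 * Rpower (A ^ 2 * Ufun d p xi) (/ 4 - 1 - 1).

Definition Hgamma d A p xi (j k : nat) : R :=
  alpha d A p xi * Umat d p j k - beta d A p xi * (Uvec d p xi j * Uvec d p xi k).

Section Partials.
Variables (d : nat) (A : R) (p : nat -> R).
Hypothesis HA : 0 < A.

Lemma weight_shift y k s : (k < d)%nat ->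
  A ^ 2 * Ufun d p (shift y k s) =
  A ^ 2 * Ufun d p y + s * (A ^ 2 * (2 * Uvec d p y k)) + s * s * (A ^ 2 * Umat d p k k).
Proof. intros Hk. rewrite Ufun_shift by exact Hk. ring. Qed.

Lemma weight_pos y : 0 < Ufun d p y -> 0 < A ^ 2 * Ufun d p y.
Proof. intros HU. apply Rmult_lt_0_compat; [apply pow_lt|]; assumption. Qed.

(* d_k gamma = W'_k / (4 W^(3/4)) = alpha (M y)_k. *)
Lemma gamma_partial y k : (k < d)%nat -> 0 < Ufun d p y ->
  is_partial (gammafun d A p) y k (alpha d A p y * Uvec d p y k).
Proof.
intros Hk HU. unfold is_partial, gammafun.
replace (fun s => Rpower (A ^ 2 * Ufun d p (shift y k s)) (/ 4)) with
  (fun s => Rpower (A ^ 2 * Ufun d p y + s * (A ^ 2 * (2 * Uvec d p y k))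
                      + s * s * (A ^ 2 * Umat d p k k)) (/ 4))
  by (extensionality s; rewrite weight_shift by exact Hk; reflexivity).
replace (alpha d A p y * Uvec d p y k) with
  (/ 4 * Rpower (A ^ 2 * Ufun d p y) (/ 4 - 1) * (A ^ 2 * (2 * Uvec d p y k)))
  by (unfold alpha; field).
apply derivable_power_quadratic, weight_pos, HU.
Qed.

(* d_j alpha = A^2 (-3/4) W^(-7/4) W'_j / 2 = - beta (M y)_j. *)
Lemma alpha_partial y j : (j < d)%nat -> 0 < Ufun d p y ->
  is_partial (alpha d A p) y j (- beta d A p y * Uvec d p y j).
Proof.
intros Hj HU. unfold is_partial, alpha.
replace (fun s => / 2 * A ^ 2 * Rpower (A ^ 2 * Ufun d p (shift y j s)) (/ 4 - 1)) with
  (fun s => / 2 * A ^ 2 * Rpower (A ^ 2 * Ufun d p y + s * (A ^ 2 * (2 * Uvec d p y j))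
                      + s * s * (A ^ 2 * Umat d p j j)) (/ 4 - 1))
  by (extensionality s; rewrite weight_shift by exact Hj; reflexivity).
replace (- beta d A p y * Uvec d p y j) with
  (/ 2 * A ^ 2 * ((/ 4 - 1) * Rpower (A ^ 2 * Ufun d p y) (/ 4 - 1 - 1) * (A ^ 2 * (2 * Uvec d p y j))))
  by (unfold beta; field).
apply (derivable_pt_lim_scal (fun s => Rpower _ _)).
apply derivable_power_quadratic, weight_pos, HU.
Qed.

(* Product rule: d_j (alpha (M xi)_k) = alpha M_jk - beta (M xi)_j (M xi)_k. *)
Lemma gamma_second_partial xi j k : (j < d)%nat -> 0 < Ufun d p xi ->
  is_partial (fun y => alpha d A p y * Uvec d p y k) xi j (Hgamma d A p xi j k).
Proof.
intros Hj HU. unfold is_partial.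
assert (Hlin : derivable_pt_lim (fun s => Uvec d p (shift xi j s) k) 0 (Umat d p j k)).
{ replace (fun s => Uvec d p (shift xi j s) k) with
    (fun s => Uvec d p xi k + s * Umat d p j k)
    by (extensionality s; rewrite Uvec_shift by exact Hj; reflexivity).
  replace (fun s => Uvec d p xi k + s * Umat d p j k) with
    (fun s => Uvec d p xi k + s * Umat d p j k + s * s * 0) by (extensionality s; ring).
  apply derivable_quadratic. }
assert (Hval : Hgamma d A p xi j k =
  - beta d A p xi * Uvec d p xi j * Uvec d p (shift xi j 0) k
  + alpha d A p (shift xi j 0) * Umat d p j k)
  by (rewrite shift_0; unfold Hgamma; ring).
rewrite Hval. exact (derivable_pt_lim_mult _ _ _ _ _ (alpha_partial xi j Hj HU) Hlin).
Qed.

End Partials.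

(* Away from the origin, gamma has Hessian Hgamma: on the ball of radius |xi| around xi,
   U stays positive, so the first partials exist and are alpha (M y)_k. *)
Lemma gamma_hessian d A p xi : 0 < A -> 0 < sqnorm d xi ->
  is_hessian d (gammafun d A p) xi (Hgamma d A p xi).
Proof.
intros HA Hxi.
exists (sqrt (sqnorm d xi)), (fun y k => alpha d A p y * Uvec d p y k).
split; [apply sqrt_lt_R0, Hxi|]. split.
- intros y Hy k Hk. apply gamma_partial; [exact HA|exact Hk|].
  apply Rlt_le_trans with (sqnorm d y); [|apply Ufun_lower].
  destruct (sqnorm_nonneg d y) as [Hpos|Hzero]; [exact Hpos|exfalso].
  assert (Hdist : sqnorm d (fun i => y i - xi i) = sqnorm d xi).
  { unfold sqnorm. apply rsum_ext. intros i Hi.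
    rewrite (sqnorm_eq0 d y (eq_sym Hzero) i Hi). ring. }
  rewrite Hdist, sqrt_sqrt in Hy by lra. lra.
- intros j k Hj Hk. apply gamma_second_partial; [exact HA|exact Hj|].
  apply Rlt_le_trans with (sqnorm d xi); [exact Hxi|apply Ufun_lower].
Qed.

Module HessianDeterminant.
Import ssreflect ssrfun ssrbool eqtype ssrnat fintype bigop ssralg zmodp matrix Rstruct.
Import GRing.Theory.

Section RankOneUpdate.
Local Open Scope ring_scope.
Variables (F : fieldType) (n : nat).

(* Matrix determinant lemma: det (1 + u v) = 1 + v u, via two block factorisations. *)
Lemma det_one_plus_rank1 (u : 'cV[F]_n) (v : 'rV[F]_n) :
  \det (1%:M + u *m v) = 1 + (v *m u) 0 0.
Proof.
pose X := block_mx (1%:M : 'M[F]_n) (- u) v (1%:M : 'M[F]_1).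
have lowerE : X = block_mx 1%:M 0 v 1%:M *m block_mx 1%:M (- u) 0 (1%:M + v *m u).
  rewrite mulmx_block !mul1mx !mulmx1 !mul0mx !addr0 mulmxN.
  by rewrite [_ + (1%:M + _)]addrC addrK.
have upperE : X = block_mx (1%:M + u *m v) (- u) 0 1%:M *m block_mx 1%:M 0 v 1%:M.
  by rewrite mulmx_block !mul1mx !mulmx1 !mul0mx !mulmx0 !add0r mulNmx addrK.
have := congr1 determinant upperE; rewrite {1}lowerE !det_mulmx.
rewrite !det_ublock !det_lblock !det1 !mul1r !mulr1 det_mx11 !mxE eqxx mulr1n.
by move=> <-.
Qed.

Lemma det_scalar_plus_rank1 a (u : 'cV[F]_n) (v : 'rV[F]_n) : a != 0 ->
  \det (a%:M + u *m v) = a ^+ n * (1 + a^-1 * (v *m u) 0 0).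
Proof.
move=> a_neq0.
have -> : a%:M + u *m v = a *: (1%:M + (a^-1 *: u) *m v).
  by rewrite scalerDr scalemx1 -scalemxAl scalerA divff // scale1r.
by rewrite detZ det_one_plus_rank1 -scalemxAr mxE.
Qed.

(* For symmetric M and w = M x: al M - be w w^T = (al Id - be w x^T) M. *)
Lemma det_sym_rank1_update (M : 'M[F]_n) (x : 'cV[F]_n) al be :
  M^T = M -> al != 0 ->
  \det (al *: M - be *: ((M *m x) *m (M *m x)^T)) =
  al ^+ n * (1 - al^-1 * be * (x^T *m (M *m x)) 0 0) * \det M.
Proof.
move=> M_sym al_neq0.
have -> : al *: M - be *: ((M *m x) *m (M *m x)^T) = (al%:M + (- (be *: (M *m x))) *m x^T) *m M.
  rewrite trmx_mul M_sym !mulmxA mulmxDl mul_scalar_mx !mulNmx -!scalemxAl.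
  by rewrite -[M *m x *m x^T *m M]mulmxA.
rewrite det_mulmx det_scalar_plus_rank1 // mulmxN -scalemxAr !mxE.
by rewrite mulrN mulrA.
Qed.

End RankOneUpdate.

Section Reals.
Local Open Scope ring_scope.

Lemma powE (x : R) k : pow x k = x ^+ k.
Proof. by elim: k => [|k IH] //=; rewrite exprS IH. Qed.

Lemma rsumE k (f : nat -> R) : rsum k f = \sum_(i < k) f i.
Proof. by elim: k => [|k IH] /=; rewrite ?big_ord0 // big_ord_recr /= IH. Qed.

Lemma ltbE a b : Nat.ltb a b = (a < b)%N.
Proof. by apply/idP/idP => [/PeanoNat.Nat.ltb_lt/ssrnat.ltP | /ssrnat.ltP/PeanoNat.Nat.ltb_lt]. Qed.

Lemma detE k (B : nat -> nat -> R) : det k B = \det (\matrix_(i < k, j < k) B i j).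
Proof.
elim: k B => [|k IH] B; first by rewrite /= det_mx00.
change (det k.+1 B) with (rsum k.+1 (fun j => pow (-1) j * B O j *
  det k (fun i l => B i.+1 (if Nat.ltb l j then l else l.+1)))).
rewrite (expand_det_row _ ord0) rsumE. apply: eq_bigr => j _.
rewrite IH mxE /cofactor add0n powE.
have -> : \matrix_(i < k, l < k) B i.+1 (if Nat.ltb l j then nat_of_ord l else l.+1)
          = row' ord0 (col' j (\matrix_(i < k.+1, l < k.+1) B i l)).
  apply/matrixP => i l; rewrite !mxE /= /bump.
  by rewrite ltbE; case: ltnP.
by rewrite mulrCA mulrA.
Qed.

Variables (d : nat) (p xi : nat -> R).
Let pv : 'cV[R]_d := \col_i p i.
Let xv : 'cV[R]_d := \col_i xi i.
Let s : R := Rplus 1 (sqnorm d p).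
Let M : 'M[R]_d := s%:M - pv *m pv^T.

Lemma MT : M^T = M.
Proof. by rewrite /M linearB /= tr_scalar_mx trmx_mul trmxK. Qed.

Lemma MxE j : (M *m xv) j 0 = Uvec d p xi j.
Proof.
rewrite /M mulmxBl mul_scalar_mx -mulmxA /Uvec /dot rsumE !mxE big_ord1 !mxE [p j * _]mulrC.
by congr (_ - _ * _); apply: eq_bigr => k _; rewrite !mxE mulrC.
Qed.

Lemma ME j k : M j k = Umat d p j k.
Proof.
rewrite /M /Umat !mxE big_ord1 !mxE.
by case: (Nat.eqb_spec j k) => [/val_inj -> | jk]; rewrite ?eqxx // (introF eqP) //; move/(congr1 val).
Qed.

Lemma sqnormE : (pv^T *m pv) 0 0 = sqnorm d p.
Proof. by rewrite /sqnorm rsumE !mxE; apply: eq_bigr => k _; rewrite !mxE. Qed.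

Lemma UfunE : (xv^T *m (M *m xv)) 0 0 = Ufun d p xi.
Proof. by rewrite -dot_Uvec /dot rsumE mxE; apply: eq_bigr => k _; rewrite MxE !mxE. Qed.

Lemma s_neq0 : s != 0.
Proof. by apply/eqP/Rgt_not_eq/one_plus_sqnorm_pos. Qed.

Lemma detM : \det M = s ^+ d * (1 - s^-1 * sqnorm d p).
Proof.
rewrite /M -[s%:M - _]/(s%:M + - (pv *m pv^T)) -mulNmx det_scalar_plus_rank1 ?s_neq0 //.
by rewrite mulmxN mxE sqnormE mulrN.
Qed.

Lemma det_Hform al be : al != 0 ->
  det d (fun j k => Rminus (Rmult al (Umat d p j k))
                           (Rmult be (Rmult (Uvec d p xi j) (Uvec d p xi k)))) =
  al ^+ d * (1 - al^-1 * be * Ufun d p xi) * (s ^+ d * (1 - s^-1 * sqnorm d p)).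
Proof.
move=> al_neq0; rewrite detE -UfunE -detM -det_sym_rank1_update ?MT //.
congr (\det _); apply/matrixP => j k; rewrite [LHS]mxE -ME -!MxE.
by move: (M *m xv) (M) => w A; rewrite !mxE big_ord1 !mxE.
Qed.

End Reals.

Lemma det_Hgamma d A p xi : alpha d A p xi <> 0 ->
  det d (Hgamma d A p xi) =
  alpha d A p xi ^ d * (1 - / alpha d A p xi * beta d A p xi * Ufun d p xi) *
  ((1 + sqnorm d p) ^ d * (1 - / (1 + sqnorm d p) * sqnorm d p)).
Proof. by move=> /eqP alpha_neq0; rewrite /Hgamma det_Hform // !powE. Qed.

End HessianDeterminant.

Section Bound.
Variables (d : nat) (A : R) (p xi : nat -> R).
Hypotheses (HA : 0 < A) (HU : 0 < Ufun d p xi).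

Lemma alpha_pos : 0 < alpha d A p xi.
Proof.
unfold alpha, Rpower.
apply Rmult_lt_0_compat; [apply Rmult_lt_0_compat; [lra|apply pow_lt, HA]|apply exp_pos].
Qed.

Lemma beta_Ufun : beta d A p xi * Ufun d p xi = 3 / 2 * alpha d A p xi.
Proof.
assert (HW : 0 < A ^ 2 * Ufun d p xi) by (apply weight_pos; assumption).
unfold alpha, beta. replace (/ 4 - 1 - 1) with ((/ 4 - 1) + - (1)) by ring.
rewrite Rpower_plus, Rpower_Ropp, Rpower_1 by exact HW.
field. split; apply Rgt_not_eq; [exact HU|exact HA].
Qed.

Lemma det_Hgamma_value : (0 < d)%nat ->
  det d (Hgamma d A p xi) = - / 2 * alpha d A p xi ^ d * (1 + sqnorm d p) ^ (d - 1).
Proof.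
intros Hd. pose proof alpha_pos as Hal. pose proof (one_plus_sqnorm_pos d p) as Hs.
rewrite HessianDeterminant.det_Hgamma by (apply Rgt_not_eq; exact Hal).
replace (/ alpha d A p xi * beta d A p xi * Ufun d p xi) with (3 / 2)
  by (rewrite Rmult_assoc, beta_Ufun; field; apply Rgt_not_eq; exact Hal).
destruct d as [|d']; [lia|]. rewrite Nat.sub_succ, Nat.sub_0_r. simpl. field. apply Rgt_not_eq; exact Hs.
Qed.

End Bound.

Definition alpha_floor c B : R := / 2 * Rpower c (/ 2) * / Rpower B (3 / 4).

Lemma alpha_floor_pos c B : 0 < alpha_floor c B.
Proof.
unfold alpha_floor, Rpower. pose proof (exp_pos (/ 2 * ln c)). pose proof (exp_pos (3 / 4 * ln B)).
apply Rmult_lt_0_compat; [lra|apply Rinv_0_lt_compat; lra].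
Qed.

Lemma alpha_closed_form d A p xi : 0 < A -> 0 < Ufun d p xi ->
  alpha d A p xi = / 2 * Rpower A (/ 2) * / Rpower (Ufun d p xi) (3 / 4).
Proof.
intros HA HU. unfold alpha.
rewrite <- Rpower_mult_distr by (try apply pow_lt; assumption).
rewrite <- (Rpower_pow 2 A HA), Rpower_mult, <- Rpower_Ropp.
replace (- (3 / 4)) with (/ 4 - 1) by field.
rewrite !Rmult_assoc, <- (Rmult_assoc (Rpower A (INR 2))), <- Rpower_plus.
simpl INR. replace (1 + 1 + (1 + 1) * (/ 4 - 1)) with (/ 2) by field. reflexivity.
Qed.

Lemma alpha_lower d A p xi c B : 0 < c <= A -> 0 < Ufun d p xi <= B ->
  alpha_floor c B <= alpha d A p xi.
Proof.
intros HcA HUB. rewrite alpha_closed_form by lra. unfold alpha_floor.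
assert (Hnum : Rpower c (/ 2) <= Rpower A (/ 2)) by (apply Rle_Rpower_l; lra).
assert (Hden : / Rpower B (3 / 4) <= / Rpower (Ufun d p xi) (3 / 4)).
{ apply Rinv_le_contravar; [unfold Rpower; apply exp_pos|apply Rle_Rpower_l; lra]. }
assert (0 < Rpower c (/ 2)) by (unfold Rpower; apply exp_pos).
assert (0 < / Rpower B (3 / 4)) by (apply Rinv_0_lt_compat; unfold Rpower; apply exp_pos).
nra.
Qed.

(* |det Hgamma| >= alpha_floor^d / 2, uniformly in p, since (1+|p|^2)^(d-1) >= 1. *)
Lemma abs_det_Hgamma_lower d A p xi c B : (0 < d)%nat -> 0 < c <= A -> 0 < Ufun d p xi <= B ->
  alpha_floor c B ^ d / 2 <= Rabs (det d (Hgamma d A p xi)).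
Proof.
intros Hd HcA HUB.
rewrite det_Hgamma_value by (lra || assumption).
pose proof (alpha_lower d A p xi c B HcA HUB) as Hal.
pose proof (alpha_floor_pos c B) as Hfl.
assert (Hpow : alpha_floor c B ^ d <= alpha d A p xi ^ d) by (apply pow_incr; lra).
assert (Hs : 1 <= (1 + sqnorm d p) ^ (d - 1))
  by (apply pow_R1_Rle; pose proof (sqnorm_nonneg d p); lra).
pose proof (pow_lt _ d Hfl).
rewrite Rabs_left1; [nra|].
pose proof (pow_lt _ (d - 1) (one_plus_sqnorm_pos d p)). nra.
Qed.

Theorem corollary3p7 (d : nat) (I : R -> Prop) (a eta : R -> (nat -> R) -> R)
  (grad_eta : R -> (nat -> R) -> nat -> R) (c : R) :
  is_interval I ->
  (* grad_eta is the spatial gradient of eta *)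
  (forall t x i, I t -> (i < d)%nat -> is_partial (eta t) x i (grad_eta t x i)) ->
  (* grad eta bounded *)
  (exists K, forall t x, I t -> sqnorm d (grad_eta t x) <= K) ->
  (* a bounded *)
  (exists A, forall t x, I t -> Rabs (a t x) <= A) ->
  0 < c ->
  (forall t x, I t -> c <= a t x) ->
  exists c0, 0 < c0 /\
    forall t x xi, I t ->
      / 2 <= sqrt (sqnorm d xi) <= 2 ->
      exists H, is_hessian d (gammafun d (a t x) (grad_eta t x)) xi H /\
                c0 <= Rabs (det d H).
Proof.
intros _ _ [K HK] _ Hc Hca.
(* On C_0, U <= (1 + |grad eta|^2) |xi|^2 <= B. *)
set (B := (1 + Rmax K 0) * 4).
exists (alpha_floor c B ^ d / 2). split; [pose proof (pow_lt _ d (alpha_floor_pos c B)); lra|].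
intros t x xi It Hxi.
set (p := grad_eta t x).
assert (HcA : 0 < c <= a t x) by (split; [|apply Hca]; assumption).
assert (Hxi2 : / 4 <= sqnorm d xi <= 4).
{ pose proof (sqrt_sqrt _ (sqnorm_nonneg d xi)). pose proof (sqrt_pos (sqnorm d xi)). nra. }
assert (Hd : (0 < d)%nat) by (destruct d; [unfold sqnorm in Hxi2; simpl in Hxi2; lra|lia]).
assert (HUB : 0 < Ufun d p xi <= B).
{ pose proof (Ufun_lower d p xi). pose proof (Ufun_upper d p xi).
  assert (sqnorm d p <= Rmax K 0) by (eapply Rle_trans; [apply HK, It|apply Rmax_l]).
  assert ((1 + sqnorm d p) * sqnorm d xi <= B) by (apply Rmult_le_compat; pose proof (sqnorm_nonneg d p); lra).
  lra. }
exists (Hgamma d (a t x) p xi). split.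
- apply gamma_hessian; lra.
- apply abs_det_Hgamma_lower; assumption.
Qed.
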